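(* Let $y$ be the solution of the problem $\varepsilon^2 y''(x)=f(x,y)$ on $(0,1)$, $y(0)=y(1)=0$, with $f$ and the Shishkin mesh $\{x_i\}_{i=0}^N$ as described in the context, and let $G$ be the discrete operator defined in the context. Assume that $\varepsilon\leqslant C_0/N$ for some constant $C_0>0$. Then there is a constant $C>0$ independent of $N$ and $\varepsilon$ such that $$|(Gy)_{N/4}|\leqslant\frac{C}{N},$$ where $(Gy)_{N/4}$ is the component with index $N/4$ (corresponding to the mesh point $x_{N/4}=\lambda$) of $G$ applied to the vector $(y(x_0),\ldots,y(x_N))^T$.
   Context: Problem: $\varepsilon^2y''(x)=f(x,y)$ on $(0,1)$, $y(0)=y(1)=0$, where $\varepsilon>0$ is a small parameter, $f\in C^k([0,1]\times\mathbb{R})$ for some $k\geq 2$, and $f_y=\partial f/\partial y\geq m>0$ on $[0,1]\times\mathbb{R}$ for a constant $m$; this problem has a unique solution $y$. Shishkin mesh: $N$ is a positive integer divisible by 4, $\lambda=\min\{1/4,\,2\varepsilon\ln N/\sqrt{m}\}$, and it is assumed that $\lambda=2\varepsilon\ln N/\sqrt{m}$. The mesh $0=x_0<x_1<\cdots<x_N=1$ is equidistant on each of $[0,\lambda]$ (with $N/4$ subintervals), $[\lambda,1-\lambda]$ (with $N/2$ subintervals) and $[1-\lambda,1]$ (with $N/4$ subintervals); thus $x_{N/4}=\lambda$, $x_{3N/4}=1-\lambda$, subintervals in $[0,\lambda]\cup[1-\lambda,1]$ have length $4\lambda/N$ and those in $[\lambda,1-\lambda]$ have length $2(1-2\lambda)/N$.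 Scheme: $\gamma$ is a constant with $\gamma\geq f_y$, and $\beta=\sqrt{\gamma}/\varepsilon$. For $i=1,\ldots,N$ let $\ell_i=x_i-x_{i-1}$, $d_i=\beta/\tanh(\beta\ell_i)$, $a_i=\beta/\sinh(\beta\ell_i)$, $\Delta d_i=d_i-a_i$. For $v=(v_0,\ldots,v_N)^T\in\mathbb{R}^{N+1}$ write $f_j=f(x_j,v_j)$ and define $Gv\in\mathbb{R}^{N+1}$ by $(Gv)_0=v_0$, $(Gv)_N=v_N$ and, for $i=1,\ldots,N-1$, $$(Gv)_i=\frac{\gamma}{\Delta d_i+\Delta d_{i+1}}\Big[(3a_i+d_i+\Delta d_{i+1})(v_{i-1}-v_i)-(3a_{i+1}+d_{i+1}+\Delta d_i)(v_i-v_{i+1})-\frac{f_{i-1}+2f_i+f_{i+1}}{\gamma}(\Delta d_i+\Delta d_{i+1})\Big].$$ *)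

From Stdlib Require Import Reals Lra.
From Coquelicot Require Import Coquelicot.
Open Scope R_scope.

Definition inD (p : R * R) : Prop := 0 <= fst p <= 1.

Definition cont_D (f : R -> R -> R) : Prop :=
  forall x y, 0 <= x <= 1 ->
    filterlim (fun p : R * R => f (fst p) (snd p))
              (within inD (locally (x, y))) (locally (f x y)).

Definition pdx (f : R -> R -> R) (x y l : R) : Prop :=
  filterlim (fun h => (f (x + h) y - f x y) / h)
            (within (fun h => h <> 0 /\ 0 <= x + h <= 1) (locally 0))
            (locally l).

Fixpoint Ck (k : nat) (f : R -> R -> R) : Prop :=
  cont_D f /\
  match k with
  | O => True
  | S k' => exists fx fy : R -> R -> R,
      (forall x y, 0 <= x <= 1 ->
         pdx f x y (fx x y) /\ is_derive (fun v => f x v) y (fy x y)) /\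
      Ck k' fx /\ Ck k' fy
  end.

Definition f_y (f : R -> R -> R) (x v : R) : R := Derive (fun w => f x w) v.

Definition lam (eps m : R) (N : nat) : R := 2 * eps * ln (INR N) / sqrt m.

Definition mesh (eps m : R) (N : nat) (i : nat) : R :=
  let l := lam eps m N in
  if (i <=? N / 4)%nat then INR i * (4 * l / INR N)
  else if (i <=? 3 * N / 4)%nat then
    l + INR (i - N / 4) * (2 * (1 - 2 * l) / INR N)
  else (1 - l) + INR (i - 3 * N / 4) * (4 * l / INR N).

Definition Gop (f : R -> R -> R) (gamma eps : R) (x : nat -> R) (N : nat)
    (v : nat -> R) (i : nat) : R :=
  let beta := sqrt gamma / eps in
  let ell j := x j - x (j - 1)%nat in
  let d j := beta / tanh (beta * ell j) in
  let a j := beta / sinh (beta * ell j) in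
  let Dd j := d j - a j in
  let fv j := f (x j) (v j) in
  if (i =? 0)%nat then v 0%nat
  else if (i =? N)%nat then v N
  else gamma / (Dd i + Dd (S i)) *
       ((3 * a i + d i + Dd (S i)) * (v (i - 1)%nat - v i)
        - (3 * a (S i) + d (S i) + Dd i) * (v i - v (S i))
        - (fv (i - 1)%nat + 2 * fv i + fv (S i)) / gamma * (Dd i + Dd (S i))).

From Stdlib Require Import Reals Lra Lia ClassicalEpsilon.
From Coquelicot Require Import Coquelicot.
Open Scope R_scope.

(* Let u0 be the reduced solution, f(x, u0(x)) = 0.  Since f_y >= m > 0, the
   implicit function theorem makes u0 a C^2 function on [0,1] whose first and
   second derivatives are bounded by constants L and P independent of eps.
   The maximum principle applied to +-(y - u0) minus the barrier
     eps^2 P / m + K (exp (- sqrt(m) x / eps) + exp (- sqrt(m) (1 - x) / eps))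
   bounds |y - u0|.  At the three mesh points around the transition point
   lambda, the choice lambda = 2 eps ln N / sqrt(m) makes the layer terms
   O(N^-2), and eps <= C0 / N makes eps^2 P / m O(N^-2) too.  So the
   differences of y across the two cells adjacent to lambda are those of u0,
   i.e. O(cell width), up to O(N^-2), and f(x_j, y(x_j)) = O(N^-2) there.
   Finally the coefficients of G at i = N/4 are controlled by
   beta / sinh (beta h) <= 1/h on the fine side and by beta H >= sqrt(gamma)/C0
   on the coarse side, which leaves each term of (Gy)_{N/4} of order 1/N. *)

Lemma cont_D_eps_delta g x y : cont_D g -> 0 <= x <= 1 ->
  forall e, 0 < e -> exists d, 0 < d /\ forall u v, 0 <= u <= 1 ->
    Rabs (u - x) < d -> Rabs (v - y) < d -> Rabs (g u v - g x y) < e.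
Proof.
  intros Hc Hx e He.
  pose proof (Hc x y Hx _ (locally_ball (g x y) (mkposreal e He))) as H.
  apply (locally_2d_locally (fun u v => inD (u, v) -> ball (g x y) e (g u v))) in H.
  destruct H as [d Hd]; exists d; split; [apply cond_pos|].
  intros u v Hu Hux Hvy; exact (Hd u v Hux Hvy Hu).
Qed.

Lemma pdx_eps_delta g x y l : pdx g x y l ->
  forall e, 0 < e -> exists d, 0 < d /\ forall h, h <> 0 -> 0 <= x + h <= 1 ->
    Rabs h < d -> Rabs ((g (x + h) y - g x y) / h - l) < e.
Proof.
  intros Hp e He.
  destruct (Hp _ (locally_ball l (mkposreal e He))) as [d Hd].
  exists d; split; [apply cond_pos|].
  intros h Hh0 Hh Hhd; apply Hd; [|exact (conj Hh0 Hh)].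
  change (Rabs (h - 0) < d); rewrite Rminus_0_r; exact Hhd.
Qed.

Lemma continuity_pt_eps_delta F t : continuity_pt F t <->
  forall e, 0 < e -> exists d, 0 < d /\
    forall t', Rabs (t' - t) < d -> Rabs (F t' - F t) < e.
Proof.
  split.
  - intros H e He; destruct (H e He) as [d [Hd P]]; exists d; split; [lra|].
    intros t' Ht'; destruct (Req_dec t' t) as [->|Hne].
    + rewrite Rminus_diag_eq, Rabs_R0; auto.
    + apply (P t'); split; [split; [exact I | auto] | exact Ht'].
  - intros H e He; destruct (H e He) as [d [Hd P]]; exists d; split; [lra|].
    intros t' [_ Ht']; exact (P t' Ht').
Qed.

(* Functions on [0,1] are composed with [clamp01] to obtain functions on R, to
   which the Stdlib continuity and extremum lemmas apply. *)
Definition clamp01 t := Rmax 0 (Rmin 1 t).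

Lemma clamp01_in t : 0 <= clamp01 t <= 1.
Proof. unfold clamp01, Rmax, Rmin; repeat destruct Rle_dec; lra. Qed.

Lemma clamp01_id t : 0 <= t <= 1 -> clamp01 t = t.
Proof. unfold clamp01, Rmax, Rmin; repeat destruct Rle_dec; lra. Qed.

Lemma clamp01_lipschitz t s : Rabs (clamp01 t - clamp01 s) <= Rabs (t - s).
Proof.
  unfold clamp01, Rmax, Rmin, Rabs; repeat destruct Rle_dec; repeat destruct Rcase_abs; lra.
Qed.

Lemma clamp01_continuous t : continuity_pt clamp01 t.
Proof.
  apply continuity_pt_eps_delta; intros e He; exists e; split; [exact He|].
  intros t' Ht'; eapply Rle_lt_trans; [apply clamp01_lipschitz | exact Ht'].
Qed.

Lemma continuity_pt_cont_D_comp g p q t : cont_D g -> (forall s, 0 <= p s <= 1) ->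
  continuity_pt p t -> continuity_pt q t -> continuity_pt (fun s => g (p s) (q s)) t.
Proof.
  intros Hg Hp Cp Cq; apply continuity_pt_eps_delta; intros e He.
  destruct (cont_D_eps_delta g (p t) (q t) Hg (Hp t) e He) as [d [Hd P]].
  destruct (proj1 (continuity_pt_eps_delta p t) Cp d Hd) as [d1 [Hd1 P1]].
  destruct (proj1 (continuity_pt_eps_delta q t) Cq d Hd) as [d2 [Hd2 P2]].
  exists (Rmin d1 d2); split; [apply Rmin_pos; auto|].
  intros t' Ht'; pose proof (Rmin_l d1 d2); pose proof (Rmin_r d1 d2).
  apply P; [apply Hp | apply P1 | apply P2]; lra.
Qed.

Lemma bounded_on_01 F : (forall t, continuity_pt (fun s => F (clamp01 s)) t) ->
  exists B, forall x, 0 <= x <= 1 -> Rabs (F x) <= B.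
Proof.
  intros HF.
  assert (CF : forall t, continuity_pt (fun s => Rabs (F (clamp01 s))) t).
  { intro t; apply (continuity_pt_comp (fun s => F (clamp01 s)) Rabs); [apply HF|].
    apply Rcontinuity_abs. }
  destruct (continuity_ab_maj _ 0 1 ltac:(lra) (fun c _ => CF c)) as [M [HM _]].
  exists (Rabs (F (clamp01 M))); intros x Hx; specialize (HM x Hx); rewrite clamp01_id in HM; auto.
Qed.

Definition has_partials g gx gy := forall x y, 0 <= x <= 1 ->
  pdx g x y (gx x y) /\ is_derive (fun v => g x v) y (gy x y).

Lemma Ck_pred k f : Ck (S k) f -> Ck k f.
Proof.
  revert f; induction k as [|k IH]; intros f [Hc [fx [fy [Hp [Hx Hy]]]]].
  - split; [exact Hc | exact I].
  - split; [exact Hc|]; exists fx, fy; auto.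
Qed.

Lemma Ck_2_of_ge k f : (2 <= k)%nat -> Ck k f -> Ck 2 f.
Proof. induction 1; auto using Ck_pred. Qed.

Lemma Ck2_partials f : Ck 2 f -> exists fx fy fxx fxy fyx fyy,
  cont_D f /\ cont_D fx /\ cont_D fy /\ cont_D fxx /\ cont_D fxy /\ cont_D fyx /\ cont_D fyy /\
  has_partials f fx fy /\ has_partials fx fxx fxy /\ has_partials fy fyx fyy.
Proof.
  intros [Hc [fx [fy [Hp [[Hcx [fxx [fxy [Hpx [[Hcxx _] [Hcxy _]]]]]]
                          [Hcy [fyx [fyy [Hpy [[Hcyx _] [Hcyy _]]]]]]]]]]].
  exists fx, fy, fxx, fxy, fyx, fyy; tauto.
Qed.

Lemma mvt_snd g gx gy x a b : has_partials g gx gy -> 0 <= x <= 1 ->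
  exists c, Rmin a b <= c <= Rmax a b /\ g x b - g x a = gy x c * (b - a).
Proof.
  intros HP Hx.
  destruct (MVT_gen (fun v => g x v) a b (gy x)) as [c Hc]; [| |exists c; exact Hc].
  - intros z _; apply (HP x z Hx).
  - intros z _; apply derivable_continuous_pt; exists (gy x z).
    apply is_derive_Reals, (HP x z Hx).
Qed.

(* Split the increment at (x + h, u x): the step in x is controlled by the
   partial quotient, the step in v by the mean value theorem and the
   continuity of gy. *)
Lemma expansion_along_curve g gx gy u x : has_partials g gx gy -> cont_D gy ->
  0 < x < 1 -> continuity_pt u x ->
  forall e, 0 < e -> exists d, 0 < d /\ forall h, h <> 0 -> Rabs h < d ->
    Rabs (g (x + h) (u (x + h)) - g x (u x) - h * gx x (u x)
          - gy x (u x) * (u (x + h) - u x))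
    <= e * (Rabs h + Rabs (u (x + h) - u x)).
Proof.
  intros HP Hc Hx Hu e He.
  assert (Hx' : 0 <= x <= 1) by lra.
  destruct (pdx_eps_delta _ _ _ _ (proj1 (HP x (u x) Hx')) e He) as [d1 [Hd1 P1]].
  destruct (cont_D_eps_delta gy x (u x) Hc Hx' e He) as [d2 [Hd2 P2]].
  destruct (proj1 (continuity_pt_eps_delta u x) Hu d2 Hd2) as [d3 [Hd3 P3]].
  exists (Rmin (Rmin d1 d2) (Rmin d3 (Rmin x (1 - x)))).
  split; [repeat apply Rmin_pos; lra|].
  intros h H0 Hh.
  destruct (proj1 (Rmin_Rgt _ _ _) Hh) as [H12 H3x].
  destruct (proj1 (Rmin_Rgt _ _ _) H12) as [h1 h2].
  destruct (proj1 (Rmin_Rgt _ _ _) H3x) as [h3 hx].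
  destruct (proj1 (Rmin_Rgt _ _ _) hx) as [hx1 hx2].
  assert (Hxh : 0 <= x + h <= 1) by (apply Rabs_def2 in hx1, hx2; lra).
  assert (Hux : Rabs (u (x + h) - u x) < d2)
    by (apply P3; replace (x + h - x) with h by ring; exact h3).
  destruct (mvt_snd g gx gy (x + h) (u x) (u (x + h)) HP Hxh) as [c [Hc1 Hc2]].
  assert (Hcu : Rabs (c - u x) < d2).
  { unfold Rmin, Rmax in Hc1; apply Rabs_def2 in Hux.
    destruct Rle_dec; apply Rabs_def1; lra. }
  assert (Q1 := P1 h H0 Hxh h1).
  assert (Q2 := P2 (x + h) c Hxh ltac:(replace (x + h - x) with h by ring; lra) Hcu).
  replace (g (x + h) (u (x + h)) - g x (u x) - h * gx x (u x)
           - gy x (u x) * (u (x + h) - u x))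
    with (h * ((g (x + h) (u x) - g x (u x)) / h - gx x (u x))
          + (gy (x + h) c - gy x (u x)) * (u (x + h) - u x))
    by (replace (g (x + h) (u (x + h))) with (g (x + h) (u x) + gy (x + h) c * (u (x + h) - u x))
          by lra; field; auto).
  eapply Rle_trans; [apply Rabs_triang|]; rewrite !Rabs_mult, Rmult_plus_distr_l.
  apply Rplus_le_compat; [rewrite Rmult_comm|]; apply Rmult_le_compat_r; try apply Rabs_pos; lra.
Qed.

Lemma derivable_pt_lim_comp_partials g gx gy u x u' :
  has_partials g gx gy -> cont_D gy -> 0 < x < 1 -> derivable_pt_lim u x u' ->
  derivable_pt_lim (fun t => g t (u t)) x (gx x (u x) + gy x (u x) * u').
Proof.
  intros HP Hc Hx Hu eps Heps.
  assert (Cu : continuity_pt u x) by (apply derivable_continuous_pt; exists u'; auto).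
  set (b := gy x (u x)).
  set (K := 2 + Rabs u' + Rabs b).
  assert (HK : 0 < K) by (unfold K; pose proof (Rabs_pos u'); pose proof (Rabs_pos b); lra).
  set (e := Rmin 1 (eps / (2 * K))).
  assert (He : 0 < e) by (apply Rmin_pos; [lra | apply Rdiv_lt_0_compat; lra]).
  assert (He1 : e <= 1) by apply Rmin_l.
  assert (He2 : e <= eps / (2 * K)) by apply Rmin_r.
  destruct (expansion_along_curve g gx gy u x HP Hc Hx Cu e He) as [d [Hd P]].
  destruct (Hu e He) as [d2 Hd2].
  exists (mkposreal _ (Rmin_pos d d2 Hd (cond_pos d2))); simpl.
  intros h Hh0 Hhd; destruct (proj1 (Rmin_Rgt _ _ _) Hhd) as [Hh1 Hh2].
  assert (Q := P h Hh0 Hh1). assert (Q2 := Hd2 h Hh0 Hh2).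
  set (D := u (x + h) - u x) in *; fold b in Q.
  assert (Hh' : 0 < Rabs h) by (apply Rabs_pos_lt; auto).
  assert (HD : Rabs D <= (Rabs u' + 1) * Rabs h).
  { replace D with ((D / h - u') * h + u' * h) by (field; auto).
    eapply Rle_trans; [apply Rabs_triang|]; rewrite !Rabs_mult; nra. }
  replace ((g (x + h) (u (x + h)) - g x (u x)) / h - (gx x (u x) + b * u'))
    with ((g (x + h) (u (x + h)) - g x (u x) - h * gx x (u x) - b * D) / h
          + b * (D / h - u')) by (field; auto).
  eapply Rle_lt_trans; [apply Rabs_triang|].
  unfold Rdiv at 1; rewrite !Rabs_mult, Rabs_inv.
  apply Rle_lt_trans with (e * (1 + (Rabs u' + 1)) + Rabs b * e).
  - apply Rplus_le_compat.
    + apply Rmult_le_reg_r with (Rabs h); auto.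
      rewrite Rmult_assoc, Rinv_l, Rmult_1_r by lra; nra.
    + apply Rmult_le_compat_l; [apply Rabs_pos | lra].
  - apply Rle_lt_trans with (e * K); [unfold K; nra|].
    apply Rle_lt_trans with (eps / (2 * K) * K); [apply Rmult_le_compat_r; lra|].
    replace (eps / (2 * K) * K) with (eps / 2) by (field; lra); lra.
Qed.

Lemma interior_max_second_derivative (P P1 : R -> R) M p2 :
  0 < M < 1 -> (forall c, 0 <= c <= 1 -> P c <= P M) ->
  (forall x, 0 < x < 1 -> derivable_pt_lim P x (P1 x)) ->
  derivable_pt_lim P1 M p2 -> p2 <= 0.
Proof.
  intros HM Hmax DP DP1.
  assert (Hcrit : P1 M = 0).
  { apply (deriv_maximum P 0 1 M (exist _ (P1 M) (DP M HM))); try lra.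
    intros x Hx0 Hx1; apply Hmax; lra. }
  destruct (Rle_lt_dec p2 0) as [|Hp2]; [assumption|exfalso].
  destruct (DP1 p2 Hp2) as [d Hd].
  set (t := Rmin d (1 - M) / 2).
  assert (Ht : 0 < t < d /\ t < 1 - M).
  { pose proof (Rmin_l d (1 - M)); pose proof (Rmin_r d (1 - M)).
    pose proof (Rmin_pos d (1 - M) (cond_pos d) ltac:(lra)); unfold t; lra. }
  destruct (MVT_cor2 P P1 M (M + t) ltac:(lra)) as [c [Ec Hc]].
  { intros c Hc; apply DP; lra. }
  assert (Hq : 0 < P1 c / (c - M)).
  { specialize (Hd (c - M) ltac:(lra) ltac:(rewrite Rabs_right; lra)).
    replace (M + (c - M)) with c in Hd by ring; rewrite Hcrit, Rminus_0_r in Hd.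
    apply Rabs_def2 in Hd; lra. }
  assert (0 < P1 c) by (replace (P1 c) with (P1 c / (c - M) * (c - M)) by (field; lra);
                        apply Rmult_lt_0_compat; lra).
  assert (P (M + t) <= P M) by (apply Hmax; lra).
  assert (0 < P1 c * (M + t - M)) by (apply Rmult_lt_0_compat; lra); lra.
Qed.

Lemma max_principle (P P1 P2 : R -> R) :
  (forall t, continuity_pt (fun t => P (clamp01 t)) t) -> P 0 <= 0 -> P 1 <= 0 ->
  (forall x, 0 < x < 1 -> is_derive P x (P1 x) /\ is_derive P1 x (P2 x)) ->
  (forall x, 0 < x < 1 -> 0 < P x -> 0 < P2 x) ->
  forall x, 0 <= x <= 1 -> P x <= 0.
Proof.
  intros HC H0 H1 HD HS x Hx.
  destruct (continuity_ab_maj _ 0 1 ltac:(lra) (fun c _ => HC c)) as [M [HM HMi]].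
  rewrite clamp01_id in HM by exact HMi.
  assert (Hmax : forall c, 0 <= c <= 1 -> P c <= P M)
    by (intros c Hc; specialize (HM c Hc); rewrite clamp01_id in HM; auto).
  destruct (Rle_dec (P x) 0) as [|Hpos]; [assumption|exfalso].
  assert (HPM : 0 < P M) by (specialize (Hmax x Hx); lra).
  assert (HMo : 0 < M < 1)
    by (split; destruct (Req_dec M 0); destruct (Req_dec M 1); subst; lra).
  apply (Rlt_not_le _ _ (HS M HMo HPM)).
  apply (interior_max_second_derivative P P1 M); auto.
  - intros c Hc; apply is_derive_Reals, (HD c Hc).
  - apply is_derive_Reals, (HD M HMo).
Qed.

Definition slope_bounded (f : R -> R -> R) m g := forall x a b, 0 <= x <= 1 -> a <= b ->
  m * (b - a) <= f x b - f x a <= g * (b - a).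

Lemma slope_bounded_of_partials f fx fy m g : has_partials f fx fy ->
  (forall x v, 0 <= x <= 1 -> m <= fy x v <= g) -> slope_bounded f m g.
Proof.
  intros HP Hb x a b Hx Hab.
  destruct (mvt_snd f fx fy x a b HP Hx) as [c [_ ->]].
  destruct (Hb x c Hx); split; apply Rmult_le_compat_r; lra.
Qed.

Lemma slope_bounded_abs f m g x a b : slope_bounded f m g -> 0 <= m -> 0 <= x <= 1 ->
  m * Rabs (b - a) <= Rabs (f x b - f x a) <= g * Rabs (b - a).
Proof.
  intros Hs Hm Hx; destruct (Rle_dec a b) as [Hab|Hba].
  - destruct (Hs x a b Hx Hab); rewrite !Rabs_right; nra.
  - destruct (Hs x b a Hx ltac:(lra)).
    rewrite <- (Rabs_Ropp (b - a)), <- (Rabs_Ropp (f x b - f x a)), !Rabs_right; nra.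
Qed.

(* The algebraic core of the implicit function theorem, with
   [D = u(x + h) - u(x)], [a = f_x] and [b = f_y] along the curve. *)
Lemma implicit_quotient_estimate a b m h D e :
  0 < m -> m <= b -> 0 < e -> e <= m / 2 -> e <= 1 -> h <> 0 ->
  Rabs (h * a + b * D) <= e * (Rabs h + Rabs D) ->
  Rabs (D / h + a / b) <= e * (1 + 2 * (Rabs a + 1) / m) / m.
Proof.
  intros Hm Hb He He2 He1 Hh H.
  assert (Hh' : 0 < Rabs h) by (apply Rabs_pos_lt; auto).
  assert (HD : Rabs D <= 2 * (Rabs a + 1) / m * Rabs h).
  { assert (T : Rabs (b * D) <= Rabs (h * a + b * D) + Rabs (h * a)).
    { replace (b * D) with ((h * a + b * D) + - (h * a)) at 1 by ring.
      eapply Rle_trans; [apply Rabs_triang | rewrite Rabs_Ropp; lra]. }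
    rewrite !Rabs_mult, (Rabs_right b) in T by lra.
    apply Rmult_le_reg_l with (m / 2); [lra|].
    replace (m / 2 * (2 * (Rabs a + 1) / m * Rabs h)) with ((Rabs a + 1) * Rabs h)
      by (field; lra).
    pose proof (Rabs_pos D); nra. }
  replace (D / h + a / b) with ((h * a + b * D) / (b * h)) by (field; split; lra).
  unfold Rdiv at 1; rewrite Rabs_mult, Rabs_inv, Rabs_mult, (Rabs_right b) by lra.
  apply Rmult_le_reg_r with (b * Rabs h); [nra|].
  rewrite Rmult_assoc, Rinv_l, Rmult_1_r by nra.
  apply Rle_trans with (e * (Rabs h + 2 * (Rabs a + 1) / m * Rabs h)); [nra|].
  replace (e * (Rabs h + 2 * (Rabs a + 1) / m * Rabs h))
    with (e * (1 + 2 * (Rabs a + 1) / m) / m * (m * Rabs h)) by (field; lra).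
  assert (0 <= 2 * (Rabs a + 1) / m) by (apply Rdiv_le_0_compat; [pose proof (Rabs_pos a)|]; lra).
  apply Rmult_le_compat_l; [apply Rdiv_le_0_compat; nra | nra].
Qed.

(* The reduced solution [u0]: [epsilon] picks the root of [f x], unique since
   [f_y >= m > 0]; outside [0,1] it takes the value at [clamp01 t]. *)
Definition reduced_solution (f : R -> R -> R) t :=
  epsilon (inhabits 0) (fun v => f (clamp01 t) v = 0).

Section ReducedSolution.

Variables f fx fy fxx fxy fyx fyy : R -> R -> R.
Variables m gamma : R.
Hypothesis f_partials : has_partials f fx fy.
Hypothesis f_cont : cont_D f.
Hypothesis fy_cont : cont_D fy.
Hypothesis m_pos : 0 < m.
Hypothesis fy_bounds : forall x v, 0 <= x <= 1 -> m <= fy x v <= gamma.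

Let u0 := reduced_solution f.

Lemma f_slope_bounded : slope_bounded f m gamma.
Proof. exact (slope_bounded_of_partials f fx fy m gamma f_partials fy_bounds). Qed.

Lemma f_root_exists x : 0 <= x <= 1 -> exists v, f x v = 0.
Proof.
  intros Hx; set (B := Rabs (f x 0) / m).
  assert (HB : 0 <= B) by (apply Rdiv_le_0_compat; [apply Rabs_pos | lra]).
  assert (E : m * B = Rabs (f x 0)) by (unfold B; field; lra).
  destruct (f_slope_bounded x 0 B Hx HB) as [S1 _].
  destruct (f_slope_bounded x (- B) 0 Hx ltac:(lra)) as [S2 _].
  assert (C : continuity (fun v => f x v)).
  { intro z; apply derivable_continuous_pt; exists (fy x z).
    apply is_derive_Reals, (f_partials x z Hx). }
  destruct (IVT_gen (fun v => f x v) (- B) B 0 C) as [v [_ Hv]]; [|exists v; exact Hv].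
  pose proof (Rle_abs (f x 0)); pose proof (Rle_abs (- f x 0)); rewrite Rabs_Ropp in *.
  unfold Rmin, Rmax; destruct Rle_dec; lra.
Qed.

Lemma reduced_root_clamp t : f (clamp01 t) (u0 t) = 0.
Proof. unfold u0, reduced_solution; apply epsilon_spec, f_root_exists, clamp01_in. Qed.

Lemma reduced_root x : 0 <= x <= 1 -> f x (u0 x) = 0.
Proof. intros Hx; rewrite <- (clamp01_id x) at 1 by exact Hx; apply reduced_root_clamp. Qed.

Lemma reduced_clamp t : u0 (clamp01 t) = u0 t.
Proof. unfold u0, reduced_solution; rewrite (clamp01_id (clamp01 t)) by apply clamp01_in; reflexivity. Qed.

Lemma reduced_dist_le x v : 0 <= x <= 1 -> Rabs (v - u0 x) <= Rabs (f x v) / m.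
Proof.
  intros Hx.
  destruct (slope_bounded_abs f m gamma x (u0 x) v f_slope_bounded ltac:(lra) Hx) as [S _].
  rewrite reduced_root, Rminus_0_r in S by exact Hx.
  apply Rmult_le_reg_l with m; [lra|].
  replace (m * (Rabs (f x v) / m)) with (Rabs (f x v)) by (field; lra); exact S.
Qed.

Lemma reduced_continuous t : continuity_pt u0 t.
Proof.
  apply continuity_pt_eps_delta; intros e He.
  destruct (cont_D_eps_delta f (clamp01 t) (u0 t) f_cont (clamp01_in t) (e * m))
    as [d [Hd P]]; [nra|].
  exists d; split; [exact Hd|]; intros t' Ht'.
  rewrite <- (reduced_clamp t'), Rabs_minus_sym.
  eapply Rle_lt_trans; [apply reduced_dist_le, clamp01_in|].
  rewrite <- (Rminus_0_r (f (clamp01 t') (u0 t))), <- (reduced_root_clamp t).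
  apply Rmult_lt_reg_r with m; [lra|].
  unfold Rdiv; rewrite Rmult_assoc, Rinv_l, Rmult_1_r by lra.
  apply P; [apply clamp01_in | | rewrite Rminus_diag_eq, Rabs_R0; auto].
  eapply Rle_lt_trans; [apply clamp01_lipschitz | exact Ht'].
Qed.

Definition reduced_d1 x := - fx x (u0 x) / fy x (u0 x).

Lemma reduced_derivative x : 0 < x < 1 -> derivable_pt_lim u0 x (reduced_d1 x).
Proof.
  intros Hx eps Heps.
  set (a := fx x (u0 x)); set (b := fy x (u0 x)).
  assert (Hbb : m <= b) by (apply fy_bounds; lra).
  set (K := 1 + 2 * (Rabs a + 1) / m).
  assert (HK : 0 < K).
  { assert (0 <= 2 * (Rabs a + 1) / m) by (apply Rdiv_le_0_compat; [pose proof (Rabs_pos a)|]; lra).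
    unfold K; lra. }
  set (e := Rmin (m / 2) (Rmin 1 (eps * m / (2 * K)))).
  assert (He : 0 < e) by (repeat apply Rmin_pos; try lra; apply Rdiv_lt_0_compat; nra).
  assert (Hem : e <= m / 2) by apply Rmin_l.
  assert (He1 : e <= 1)
    by (apply Rle_trans with (Rmin 1 (eps * m / (2 * K))); [apply Rmin_r | apply Rmin_l]).
  assert (He2 : e <= eps * m / (2 * K))
    by (apply Rle_trans with (Rmin 1 (eps * m / (2 * K))); apply Rmin_r).
  destruct (expansion_along_curve f fx fy u0 x f_partials fy_cont Hx
              (reduced_continuous x) e He) as [d [Hd P]].
  exists (mkposreal _ (Rmin_pos d (Rmin x (1 - x)) Hd ltac:(apply Rmin_pos; lra))); simpl.
  intros h Hh0 Hhd; destruct (proj1 (Rmin_Rgt _ _ _) Hhd) as [Hh1 Hh2].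
  destruct (proj1 (Rmin_Rgt _ _ _) Hh2) as [Hx1 Hx2].
  assert (Hhx : 0 <= x + h <= 1) by (apply Rabs_def2 in Hx1, Hx2; lra).
  assert (Q := P h Hh0 Hh1).
  rewrite (reduced_root (x + h) Hhx), (reduced_root x ltac:(lra)) in Q; fold a b in Q.
  replace (0 - 0 - h * a - b * (u0 (x + h) - u0 x))
    with (- (h * a + b * (u0 (x + h) - u0 x))) in Q by ring.
  rewrite Rabs_Ropp in Q.
  assert (Hq := implicit_quotient_estimate a b m h (u0 (x + h) - u0 x) e
                  m_pos Hbb He Hem He1 Hh0 Q); fold K in Hq.
  unfold reduced_d1; fold a b.
  replace ((u0 (x + h) - u0 x) / h - - a / b) with ((u0 (x + h) - u0 x) / h + a / b)
    by (field; lra).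
  eapply Rle_lt_trans; [exact Hq|].
  apply Rle_lt_trans with (eps * m / (2 * K) * K / m).
  - unfold Rdiv; apply Rmult_le_compat_r; [left; apply Rinv_0_lt_compat; lra|].
    apply Rmult_le_compat_r; lra.
  - replace (eps * m / (2 * K) * K / m) with (eps / 2) by (field; lra); lra.
Qed.

Hypothesis fx_partials : has_partials fx fxx fxy.
Hypothesis fy_partials : has_partials fy fyx fyy.
Hypothesis fx_cont : cont_D fx.
Hypothesis fxx_cont : cont_D fxx.
Hypothesis fxy_cont : cont_D fxy.
Hypothesis fyx_cont : cont_D fyx.
Hypothesis fyy_cont : cont_D fyy.

Definition total_dx gx gy x := gx x (u0 x) + gy x (u0 x) * reduced_d1 x.

Definition reduced_d2 x :=
  (fx x (u0 x) * total_dx fyx fyy x - fy x (u0 x) * total_dx fxx fxy x) / fy x (u0 x) ^ 2.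

Lemma reduced_d1_derivative x : 0 < x < 1 -> is_derive reduced_d1 x (reduced_d2 x).
Proof.
  intros Hx.
  assert (Hfy : fy x (u0 x) <> 0) by (destruct (fy_bounds x (u0 x)); lra).
  replace (reduced_d2 x)
    with ((- total_dx fxx fxy x * fy x (u0 x) - - fx x (u0 x) * total_dx fyx fyy x)
          / fy x (u0 x) ^ 2) by (unfold reduced_d2; field; exact Hfy).
  apply (is_derive_div (fun t => - fx t (u0 t)) (fun t => fy t (u0 t))); [| |exact Hfy].
  - apply (is_derive_opp (fun t => fx t (u0 t))), is_derive_Reals.
    apply derivable_pt_lim_comp_partials; auto; apply reduced_derivative, Hx.
  - apply is_derive_Reals, derivable_pt_lim_comp_partials; auto.
    apply reduced_derivative, Hx.
Qed.

Lemma continuity_pt_along_reduced g t : cont_D g ->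
  continuity_pt (fun s => g (clamp01 s) (u0 (clamp01 s))) t.
Proof.
  intros Hg; apply continuity_pt_cont_D_comp; auto using clamp01_in, clamp01_continuous.
  apply (continuity_pt_comp clamp01 u0); auto using clamp01_continuous, reduced_continuous.
Qed.

Lemma fy_along_reduced_neq0 s : fy (clamp01 s) (u0 (clamp01 s)) <> 0.
Proof. destruct (fy_bounds (clamp01 s) (u0 (clamp01 s)) (clamp01_in s)); lra. Qed.

Lemma reduced_d1_continuous t : continuity_pt (fun s => reduced_d1 (clamp01 s)) t.
Proof.
  unfold reduced_d1; apply continuity_pt_div; auto using fy_along_reduced_neq0.
  - apply continuity_pt_opp, continuity_pt_along_reduced, fx_cont.
  - apply continuity_pt_along_reduced, fy_cont.
Qed.

Lemma reduced_d2_continuous t : continuity_pt (fun s => reduced_d2 (clamp01 s)) t.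
Proof.
  pose proof reduced_d1_continuous t.
  unfold reduced_d2, total_dx.
  apply (continuity_pt_div _ (fun s => fy (clamp01 s) (u0 (clamp01 s)) ^ 2));
    [| |apply pow_nonzero, fy_along_reduced_neq0].
  - repeat first [ assumption | apply continuity_pt_along_reduced; assumption
                 | apply continuity_pt_minus | apply continuity_pt_mult
                 | apply continuity_pt_plus | apply continuity_pt_opp ].
  - apply (continuity_pt_comp (fun s => fy (clamp01 s) (u0 (clamp01 s))) (fun z => z ^ 2)).
    + apply continuity_pt_along_reduced, fy_cont.
    + apply derivable_continuous_pt; reg.
Qed.

Lemma reduced_solution_C2_bounded : exists u1 u2 L P,
  (forall x, 0 <= x <= 1 -> f x (u0 x) = 0) /\ (forall t, continuity_pt u0 t) /\
  (forall x, 0 < x < 1 -> is_derive u0 x (u1 x) /\ is_derive u1 x (u2 x)) /\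
  (forall x, 0 <= x <= 1 -> Rabs (u1 x) <= L) /\ (forall x, 0 <= x <= 1 -> Rabs (u2 x) <= P).
Proof.
  destruct (bounded_on_01 _ reduced_d1_continuous) as [L HL].
  destruct (bounded_on_01 _ reduced_d2_continuous) as [P HP].
  exists reduced_d1, reduced_d2, L, P.
  split; [exact reduced_root|]; split; [exact reduced_continuous|].
  split; [|split; [exact HL | exact HP]].
  intros x Hx; split; [apply is_derive_Reals, reduced_derivative, Hx|].
  apply reduced_d1_derivative, Hx.
Qed.

End ReducedSolution.

Lemma exp_le_compat a b : a <= b -> exp a <= exp b.
Proof.
  intros H; destruct (Rle_lt_or_eq_dec _ _ H) as [Hlt| ->];
    [left; apply exp_increasing, Hlt | right; reflexivity].
Qed.

Lemma tanh_half_exp t : tanh (t / 2) = 1 - 2 / (exp t + 1).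
Proof.
  assert (Et : exp t = exp (t / 2) * exp (t / 2))
    by (rewrite <- exp_plus; f_equal; field).
  pose proof (exp_pos (t / 2)).
  unfold tanh, sinh, cosh; rewrite Et, exp_Ropp; field; nra.
Qed.

Lemma tanh_half_bounds t : 0 < t -> 0 < tanh (t / 2) < 1.
Proof.
  intros Ht; rewrite tanh_half_exp.
  pose proof (exp_ineq1 t ltac:(lra)); pose proof (exp_pos t).
  assert (0 < 2 / (exp t + 1)) by (apply Rdiv_lt_0_compat; lra).
  assert (2 / (exp t + 1) < 1).
  { apply Rmult_lt_reg_r with (exp t + 1); [lra|].
    unfold Rdiv; rewrite Rmult_assoc, Rinv_l; lra. }
  lra.
Qed.

Lemma tanh_half_le s t : s <= t -> tanh (s / 2) <= tanh (t / 2).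
Proof.
  intros Hst; rewrite !tanh_half_exp.
  pose proof (exp_le_compat s t Hst); pose proof (exp_pos s); unfold Rdiv.
  apply Rplus_le_compat_l, Ropp_le_contravar, Rmult_le_compat_l, Rinv_le_contravar; lra.
Qed.

Lemma coth_sub_csch b t : 0 < t -> b / tanh t - b / sinh t = b * tanh (t / 2).
Proof.
  intros Ht; rewrite tanh_half_exp.
  pose proof (exp_ineq1 t ltac:(lra)); pose proof (exp_pos t).
  unfold tanh, sinh, cosh; rewrite exp_Ropp; field; repeat split; nra.
Qed.

Lemma id_le_sinh t : 0 <= t -> t <= sinh t.
Proof.
  intros Ht; destruct (Rle_lt_or_eq_dec _ _ Ht) as [Hlt|<-]; [|rewrite sinh_0; lra].
  destruct (MVT_cor2 sinh cosh 0 t Hlt) as [c [E _]];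
    [intros c _; apply derivable_pt_lim_sinh|].
  rewrite sinh_0, !Rminus_0_r in E.
  assert (1 <= cosh c).
  { unfold cosh; rewrite exp_Ropp; pose proof (exp_pos c).
    apply Rmult_le_reg_r with (2 * exp c); [lra|].
    replace ((exp c + / exp c) / 2 * (2 * exp c)) with (exp c * exp c + 1) by (field; lra).
    pose proof (pow2_ge_0 (exp c - 1)); nra. }
  nra.
Qed.

Lemma csch_coef_le b h : 0 < b -> 0 < h -> b / sinh (b * h) <= 1 / h.
Proof.
  intros Hb Hh; assert (Hbh : 0 < b * h) by nra.
  pose proof (id_le_sinh (b * h) ltac:(lra)).
  apply Rmult_le_reg_r with (h * sinh (b * h)); [nra|].
  replace (b / sinh (b * h) * (h * sinh (b * h))) with (b * h) by (field; lra).
  replace (1 / h * (h * sinh (b * h))) with (sinh (b * h)) by (field; lra); lra.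
Qed.

Lemma Rabs_combination_le p q u v w p' q' : 0 <= p <= p' -> 0 <= q <= q' ->
  Rabs (p * u - q * v - w) <= p' * Rabs u + q' * Rabs v + Rabs w.
Proof.
  intros Hp Hq; unfold Rminus.
  eapply Rle_trans; [apply Rabs_triang|]; rewrite Rabs_Ropp.
  eapply Rle_trans; [apply Rplus_le_compat_r, Rabs_triang|].
  rewrite Rabs_Ropp, !Rabs_mult, (Rabs_right p), (Rabs_right q) by lra.
  pose proof (Rabs_pos u); pose proof (Rabs_pos v); nra.
Qed.

Definition Gop_interior g b h H Y0 Y1 Y2 F0 F1 F2 :=
  let d t := b / tanh (b * t) in
  let a t := b / sinh (b * t) in
  let Dd t := d t - a t in
  g / (Dd h + Dd H) *
  ((3 * a h + d h + Dd H) * (Y0 - Y1) - (3 * a H + d H + Dd h) * (Y1 - Y2)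
   - (F0 + 2 * F1 + F2) / g * (Dd h + Dd H)).

Lemma Gop_at_interior f g eps x N v i : (0 < i < N)%nat ->
  Gop f g eps x N v i =
  Gop_interior g (sqrt g / eps) (x i - x (i - 1)%nat) (x (S i) - x i)
    (v (i - 1)%nat) (v i) (v (S i)) (f (x (i - 1)%nat) (v (i - 1)%nat))
    (f (x i) (v i)) (f (x (S i)) (v (S i))).
Proof.
  intros Hi; unfold Gop.
  replace (i =? 0)%nat with false by (symmetry; apply Nat.eqb_neq; lia).
  replace (i =? N)%nat with false by (symmetry; apply Nat.eqb_neq; lia).
  replace (S i - 1)%nat with i by lia; reflexivity.
Qed.

Lemma Rdiv_le_compat a a' s s' : 0 <= a <= a' -> 0 < s' <= s -> a / s <= a' / s'.
Proof.
  intros Ha Hs; unfold Rdiv.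
  apply Rmult_le_compat; [lra | left; apply Rinv_0_lt_compat; lra | lra |].
  apply Rinv_le_contravar; lra.
Qed.

(* On the fine side [a h <= 1/h]; on the coarse side [b H >= T] bounds [a H]
   and keeps the denominator [Dd h + Dd H] above [b tanh (T/2)]. *)
Lemma Gop_interior_bound g b h H T Y0 Y1 Y2 F0 F1 F2 :
  0 < g -> 0 < b -> 0 < h -> 0 < T -> T <= b * H ->
  Rabs (Gop_interior g b h H Y0 Y1 Y2 F0 F1 F2)
  <= g * (4 / h + 2 * b) / (b * tanh (T / 2)) * Rabs (Y0 - Y1)
     + g * (4 / sinh T + 2) / tanh (T / 2) * Rabs (Y1 - Y2)
     + Rabs (F0 + 2 * F1 + F2).
Proof.
  intros Hg Hb Hh HT HTH; unfold Gop_interior.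
  assert (Hbh : 0 < b * h) by nra.
  assert (Edh := coth_sub_csch b (b * h) Hbh).
  assert (EdH := coth_sub_csch b (b * H) ltac:(lra)).
  set (c := tanh (T / 2)) in *; set (th := tanh (b * h / 2)) in *.
  set (tH := tanh (b * H / 2)) in *.
  set (ah := b / sinh (b * h)) in *; set (aH := b / sinh (b * H)) in *.
  assert (Hc : 0 < c < 1) by apply tanh_half_bounds, HT.
  assert (Hth : 0 < th < 1) by apply tanh_half_bounds, Hbh.
  assert (HtH : c <= tH < 1) by (split; [apply tanh_half_le | apply tanh_half_bounds]; lra).
  assert (Hs : 0 < sinh T <= sinh (b * H)).
  { pose proof (id_le_sinh T ltac:(lra)).
    split; [lra|]; destruct (Rle_lt_or_eq_dec _ _ HTH) as [Hlt| ->];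
      [left; apply sinh_lt, Hlt | lra]. }
  assert (Hah : 0 <= ah <= 1 / h)
    by (split; [apply Rdiv_le_0_compat; pose proof (id_le_sinh (b * h)) | apply csch_coef_le]; lra).
  assert (HaH : 0 <= aH <= b / sinh T)
    by (split; [apply Rdiv_le_0_compat | apply Rdiv_le_compat]; lra).
  rewrite Edh, EdH.
  replace (b / tanh (b * h)) with (ah + b * th) by lra.
  replace (b / tanh (b * H)) with (aH + b * tH) by lra.
  set (S := b * th + b * tH).
  assert (HS : b * c <= S <= 2 * b) by (unfold S; split; nra).
  assert (Hbc : 0 < b * c) by nra.
  replace (g / S * ((3 * ah + (ah + b * th) + b * tH) * (Y0 - Y1)
                    - (3 * aH + (aH + b * tH) + b * th) * (Y1 - Y2)
                    - (F0 + 2 * F1 + F2) / g * S))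
    with (g * (4 * ah + S) / S * (Y0 - Y1) - g * (4 * aH + S) / S * (Y1 - Y2)
          - (F0 + 2 * F1 + F2)) by (unfold S; field; nra).
  apply Rabs_combination_le.
  - split; [apply Rdiv_le_0_compat; [apply Rmult_le_pos|]; lra|].
    apply Rdiv_le_compat; [split; [apply Rmult_le_pos|apply Rmult_le_compat_l] | ]; lra.
  - replace (g * (4 / sinh T + 2) / c) with (g * (4 * (b / sinh T) + 2 * b) / (b * c))
      by (field; lra).
    split; [apply Rdiv_le_0_compat; [apply Rmult_le_pos|]; lra|].
    apply Rdiv_le_compat; [split; [apply Rmult_le_pos|apply Rmult_le_compat_l] | ]; lra.
Qed.

Definition layer_barrier A K s x := A + K * (exp (- s * x) + exp (- s * (1 - x))).

Lemma layer_barrier_derivative A K s x : is_derive (layer_barrier A K s) x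
  (K * (- s * exp (- s * x) + s * exp (- s * (1 - x)))).
Proof. unfold layer_barrier; auto_derive; auto; unfold Rminus; ring. Qed.

Lemma layer_barrier_derivative2 K s x :
  is_derive (fun x => K * (- s * exp (- s * x) + s * exp (- s * (1 - x)))) x
    (K * (s * s) * (exp (- s * x) + exp (- s * (1 - x)))).
Proof. auto_derive; auto; unfold Rminus; ring. Qed.

Lemma layer_barrier_continuous A K s t : continuity_pt (layer_barrier A K s) t.
Proof.
  apply derivable_continuous_pt; eexists; apply is_derive_Reals, layer_barrier_derivative.
Qed.

Lemma layer_barrier_endpoints A K s : 0 <= A -> 0 <= K ->
  K <= layer_barrier A K s 0 /\ K <= layer_barrier A K s 1.
Proof.
  intros HA HK; unfold layer_barrier.
  rewrite Rminus_0_r, Rminus_diag_eq, !Rmult_0_r, exp_0 by reflexivity.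
  pose proof (exp_pos (- s * 1)); split; nra.
Qed.

Lemma mesh_transition eps m N q : N = (4 * q)%nat -> (1 <= q)%nat ->
  mesh eps m N (q - 1) = lam eps m N - 4 * lam eps m N / INR N /\
  mesh eps m N q = lam eps m N /\
  mesh eps m N (S q) = lam eps m N + 2 * (1 - 2 * lam eps m N) / INR N.
Proof.
  intros EN Hq.
  assert (E1 : (N / 4 = q)%nat) by (subst; rewrite Nat.mul_comm; apply Nat.div_mul; lia).
  assert (E2 : (3 * N / 4 = 3 * q)%nat)
    by (subst; replace (3 * (4 * q))%nat with (3 * q * 4)%nat by lia; apply Nat.div_mul; lia).
  assert (HN : INR N = 4 * INR q) by (subst; rewrite mult_INR; simpl; ring).
  assert (Hq0 : 0 < INR q) by (apply lt_0_INR; lia).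
  unfold mesh; rewrite E1, E2.
  replace (q - 1 <=? q)%nat with true by (symmetry; apply Nat.leb_le; lia).
  replace (q <=? q)%nat with true by (symmetry; apply Nat.leb_le; lia).
  replace (S q <=? q)%nat with false by (symmetry; apply Nat.leb_gt; lia).
  replace (S q <=? 3 * q)%nat with true by (symmetry; apply Nat.leb_le; lia).
  replace (S q - q)%nat with 1%nat by lia.
  rewrite minus_INR by lia; rewrite HN; simpl; split; [|split]; field; lra.
Qed.

Lemma exp_neg_2ln n : 0 < n -> exp (- (2 * ln n)) = 1 / (n * n).
Proof.
  intros Hn; rewrite exp_Ropp; replace (2 * ln n) with (ln n + ln n) by ring.
  rewrite exp_plus, exp_ln by exact Hn; field; lra.
Qed.

(* [s l = 2 ln n] makes the layer term [n^-2] at distance [l] from the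
   boundary; one fine step [4 l / n] back costs the factor [exp (8 ln n / n)],
   at most [exp 8]. *)
Lemma layer_barrier_near_transition A K s n l X : 0 <= K -> 4 <= n ->
  s * l = 2 * ln n -> 0 < s -> l - 4 * l / n <= X -> l <= 1 - X ->
  layer_barrier A K s X <= A + K * (exp 8 + 1) / (n * n).
Proof.
  intros HK Hn Hsl Hs H1 H2; unfold layer_barrier.
  assert (Hn0 : 0 < n) by lra.
  assert (Hlnn : ln n / n <= 1).
  { pose proof (exp_ineq1_le (ln n)); rewrite exp_ln in H by exact Hn0.
    apply Rmult_le_reg_r with n; [lra|].
    replace (ln n / n * n) with (ln n) by (field; lra); lra. }
  assert (E1 : exp (- s * X) <= exp 8 / (n * n)).
  { replace (exp 8 / (n * n)) with (exp (8 + - (2 * ln n)))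
      by (rewrite exp_plus, exp_neg_2ln by exact Hn0; field; lra).
    apply exp_le_compat.
    assert (s * (l - 4 * l / n) <= s * X) by (apply Rmult_le_compat_l; lra).
    replace (s * (l - 4 * l / n)) with (s * l * (1 - 4 / n)) in H by (field; lra).
    rewrite Hsl in H.
    replace (2 * ln n * (1 - 4 / n)) with (2 * ln n - 8 * (ln n / n)) in H by (field; lra).
    lra. }
  assert (E2 : exp (- s * (1 - X)) <= 1 / (n * n)).
  { rewrite <- exp_neg_2ln by exact Hn0; apply exp_le_compat; rewrite <- Hsl.
    assert (s * l <= s * (1 - X)) by (apply Rmult_le_compat_l; lra); lra. }
  replace (K * (exp 8 + 1) / (n * n)) with (K * (exp 8 / (n * n) + 1 / (n * n)))
    by (field; lra).
  apply Rplus_le_compat_l, Rmult_le_compat_l; lra.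
Qed.

(* The fine-mesh term [(4 sqrt(gamma) eps / h + 2 gamma) (L h + 2 R)] of [G],
   with [r = 1/N], [R = R' r^2] and [h = 8 eps ln N / (sqrt(m) N)]. *)
Lemma fine_side_term_le sg g eps h r C0 sm L R' :
  0 <= sg -> 0 <= g -> 0 < h -> 0 <= L -> 0 <= R' ->
  0 < r <= 1 -> eps <= C0 * r -> 8 * eps * r <= sm * h -> h <= r ->
  (4 * sg * (eps / h) + 2 * g) * (L * h + 2 * (R' * (r * r)))
  <= (4 * sg * L * C0 + sg * sm * R' + 2 * g * L + 4 * g * R') * r.
Proof.
  intros Hsg Hg Hh HL HR Hr He Hsm Hhr.
  replace ((4 * sg * (eps / h) + 2 * g) * (L * h + 2 * (R' * (r * r))))
    with (4 * sg * L * eps + sg * R' * r * (8 * eps * r / h) + 2 * g * L * h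
          + 4 * g * R' * (r * r)) by (field; lra).
  assert (8 * eps * r / h <= sm)
    by (apply Rmult_le_reg_r with h; [|unfold Rdiv; rewrite Rmult_assoc, Rinv_l]; lra).
  assert (r * r <= r) by nra.
  assert (0 <= sg * L) by nra; assert (0 <= sg * R' * r) by (apply Rmult_le_pos; nra).
  assert (0 <= g * L) by nra; assert (0 <= g * R') by nra.
  nra.
Qed.

Definition transition_const gamma m C0 L P K :=
  let R' := C0 ^ 2 * P / m + K * (exp 8 + 1) in
  let T := sqrt gamma / C0 in
  (4 * sqrt gamma * L * C0 + sqrt gamma * sqrt m * R' + 2 * gamma * L + 4 * gamma * R'
   + gamma * (4 / sinh T + 2) * (2 * L + 2 * R')) / tanh (T / 2) + 4 * gamma * R'.

Section Transition.

Variable f : R -> R -> R.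
Variables m gamma : R.
Variables u0 u1 u2 : R -> R.
Variables L P : R.
Hypothesis f_slope : slope_bounded f m gamma.
Hypothesis m_pos : 0 < m.
Hypothesis u0_root : forall x, 0 <= x <= 1 -> f x (u0 x) = 0.
Hypothesis u0_cont : forall t, continuity_pt u0 t.
Hypothesis u0_derivs : forall x, 0 < x < 1 -> is_derive u0 x (u1 x) /\ is_derive u1 x (u2 x).
Hypothesis u1_bound : forall x, 0 <= x <= 1 -> Rabs (u1 x) <= L.
Hypothesis u2_bound : forall x, 0 <= x <= 1 -> Rabs (u2 x) <= P.

Lemma L_nonneg : 0 <= L.
Proof. apply Rle_trans with (Rabs (u1 0)); [apply Rabs_pos | apply u1_bound; lra]. Qed.

Lemma P_nonneg : 0 <= P.
Proof. apply Rle_trans with (Rabs (u2 0)); [apply Rabs_pos | apply u2_bound; lra]. Qed.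

Lemma reduced_lipschitz a b : 0 <= a <= 1 -> 0 <= b <= 1 ->
  Rabs (u0 a - u0 b) <= L * Rabs (a - b).
Proof.
  intros Ha Hb.
  destruct (MVT_gen u0 b a u1) as [c [Hc ->]].
  - intros x Hx; apply u0_derivs; unfold Rmin, Rmax in Hx; destruct Rle_dec in Hx; lra.
  - intros x _; apply u0_cont.
  - rewrite Rabs_mult; apply Rmult_le_compat_r; [apply Rabs_pos|].
    apply u1_bound; unfold Rmin, Rmax in Hc; destruct Rle_dec in Hc; lra.
Qed.

Variable eps : R.
Variables y y1 y2 : R -> R.
Hypothesis eps_pos : 0 < eps.
Hypothesis y_cont : forall x, 0 <= x <= 1 ->
  filterlim y (within (fun t => 0 <= t <= 1) (locally x)) (locally (y x)).
Hypothesis y_derivs : forall x, 0 < x < 1 ->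
  is_derive y x (y1 x) /\ is_derive y1 x (y2 x) /\ eps ^ 2 * y2 x = f x (y x).
Hypothesis y_at_0 : y 0 = 0.
Hypothesis y_at_1 : y 1 = 0.

Lemma solution_clamp_continuous t : continuity_pt (fun s => y (clamp01 s)) t.
Proof.
  apply continuity_pt_eps_delta; intros e He.
  destruct (y_cont (clamp01 t) (clamp01_in t) _ (locally_ball (y (clamp01 t)) (mkposreal e He)))
    as [d Hd].
  exists d; split; [apply cond_pos|]; intros t' Ht'.
  apply (Hd (clamp01 t')); [|apply clamp01_in].
  change (Rabs (clamp01 t' - clamp01 t) < d).
  eapply Rle_lt_trans; [apply clamp01_lipschitz | exact Ht'].
Qed.

Let A := eps ^ 2 * P / m.
Let K := Rabs (u0 0) + Rabs (u0 1).
Let s := sqrt m / eps.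

Lemma A_nonneg : 0 <= A.
Proof. pose proof P_nonneg; apply Rdiv_le_0_compat; [apply Rmult_le_pos|]; nra. Qed.

Lemma K_nonneg : 0 <= K.
Proof. pose proof (Rabs_pos (u0 0)); pose proof (Rabs_pos (u0 1)); unfold K; lra. Qed.

(* Where [sg (y - u0)] exceeds the barrier, [f] is at least [m] times that
   excess, and [eps^2 s^2 = m], [m A = eps^2 P] make [w''] positive. *)
Lemma barrier_excess_convex sg x : (sg = 1 \/ sg = -1) -> 0 < x < 1 ->
  0 < sg * (y x - u0 x) - layer_barrier A K s x ->
  0 < sg * (y2 x - u2 x) - K * (s * s) * (exp (- s * x) + exp (- s * (1 - x))).
Proof.
  intros Hsg Hx Hpos; unfold layer_barrier in Hpos.
  assert (Hx' : 0 <= x <= 1) by lra.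
  assert (HP : Rabs (u2 x) <= P) by (apply u2_bound, Hx').
  pose proof (Rabs_pos (u2 x)); apply Rabs_le_between in HP.
  assert (HE : 0 < exp (- s * x) + exp (- s * (1 - x)))
    by (pose proof (exp_pos (- s * x)); pose proof (exp_pos (- s * (1 - x))); lra).
  pose proof A_nonneg; pose proof K_nonneg.
  assert (Hs2 : eps ^ 2 * (s * s) = m).
  { unfold s; replace (eps ^ 2 * (sqrt m / eps * (sqrt m / eps))) with (sqrt m * sqrt m)
      by (field; lra); apply sqrt_sqrt; lra. }
  assert (EA : m * A = eps ^ 2 * P) by (unfold A; field; lra).
  assert (Hmono : m * (sg * (y x - u0 x)) <= sg * (eps ^ 2 * y2 x)).
  { destruct (y_derivs x Hx) as [_ [_ ->]].
    destruct Hsg as [-> | ->].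
    - destruct (f_slope x (u0 x) (y x) Hx' ltac:(nra)); rewrite u0_root in * by exact Hx'; lra.
    - destruct (f_slope x (y x) (u0 x) Hx' ltac:(nra)); rewrite u0_root in * by exact Hx'; lra. }
  apply Rmult_lt_reg_l with (eps ^ 2); [nra|]; rewrite Rmult_0_r.
  replace (eps ^ 2 * (sg * (y2 x - u2 x) - K * (s * s) * (exp (- s * x) + exp (- s * (1 - x)))))
    with (sg * (eps ^ 2 * y2 x) - sg * eps ^ 2 * u2 x
          - K * (eps ^ 2 * (s * s)) * (exp (- s * x) + exp (- s * (1 - x)))) by ring.
  rewrite Hs2.
  assert (sg * eps ^ 2 * u2 x <= eps ^ 2 * P) by (destruct Hsg as [-> | ->]; nra).
  nra.
Qed.

Lemma solution_barrier_estimate x : 0 <= x <= 1 ->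
  Rabs (y x - u0 x) <= layer_barrier A K s x.
Proof.
  destruct (layer_barrier_endpoints A K s A_nonneg K_nonneg) as [B0 B1].
  assert (Hside : forall sg, (sg = 1 \/ sg = -1) -> forall x, 0 <= x <= 1 ->
            sg * (y x - u0 x) - layer_barrier A K s x <= 0).
  { intros sg Hsg.
    apply (max_principle _
      (fun x => sg * (y1 x - u1 x) - K * (- s * exp (- s * x) + s * exp (- s * (1 - x))))
      (fun x => sg * (y2 x - u2 x) - K * (s * s) * (exp (- s * x) + exp (- s * (1 - x))))).
    - intro t; apply continuity_pt_minus.
      + apply continuity_pt_mult; [apply continuity_pt_const; intros ? ?; reflexivity|].
        apply continuity_pt_minus; [apply solution_clamp_continuous|].
        apply (continuity_pt_comp clamp01 u0); auto using clamp01_continuous.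
      + apply (continuity_pt_comp clamp01 (layer_barrier A K s));
          auto using clamp01_continuous, layer_barrier_continuous.
    - rewrite y_at_0; pose proof (Rle_abs (u0 0)); pose proof (Rle_abs (- u0 0)).
      rewrite Rabs_Ropp in *; unfold K in *; pose proof (Rabs_pos (u0 1)).
      destruct Hsg as [-> | ->]; lra.
    - rewrite y_at_1; pose proof (Rle_abs (u0 1)); pose proof (Rle_abs (- u0 1)).
      rewrite Rabs_Ropp in *; unfold K in *; pose proof (Rabs_pos (u0 0)).
      destruct Hsg as [-> | ->]; lra.
    - intros z Hz; destruct (y_derivs z Hz) as [Dy [Dy1 _]].
      destruct (u0_derivs z Hz) as [Du0 Du1]; split.
      + apply (is_derive_minus (fun x => sg * (y x - u0 x)));
          [apply (is_derive_scal (fun x => y x - u0 x)), (is_derive_minus y u0); auto|].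
        apply layer_barrier_derivative.
      + apply (is_derive_minus (fun x => sg * (y1 x - u1 x)));
          [apply (is_derive_scal (fun x => y1 x - u1 x)), (is_derive_minus y1 u1); auto|].
        apply layer_barrier_derivative2.
    - intros z Hz; apply barrier_excess_convex; auto. }
  intros Hx; pose proof (Hside 1 (or_introl eq_refl) x Hx).
  pose proof (Hside (-1) (or_intror eq_refl) x Hx).
  unfold Rabs; destruct Rcase_abs; lra.
Qed.

Lemma reaction_le x : 0 <= x <= 1 -> Rabs (f x (y x)) <= gamma * Rabs (y x - u0 x).
Proof.
  intros Hx; destruct (slope_bounded_abs f m gamma x (u0 x) (y x) f_slope ltac:(lra) Hx) as [_ H].
  rewrite u0_root, Rminus_0_r in H by exact Hx; exact H.
Qed.

Variable C0 : R.
Variable N : nat.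
Hypothesis C0_pos : 0 < C0.
Hypothesis N_pos : (0 < N)%nat.
Hypothesis N_mod4 : (N mod 4 = 0)%nat.
Hypothesis lam_le : lam eps m N <= 1 / 4.
Hypothesis eps_le : eps <= C0 / INR N.

Let l := lam eps m N.
Let hf := 4 * l / INR N.
Let hc := 2 * (1 - 2 * l) / INR N.
Let R' := C0 ^ 2 * P / m + K * (exp 8 + 1).
Let R := R' / (INR N * INR N).
Let T := sqrt gamma / C0.
Let c := tanh (T / 2).

Lemma N_as_4q : N = (4 * (N / 4))%nat.
Proof. pose proof (Nat.div_mod_eq N 4); lia. Qed.

Lemma N_ge4 : 4 <= INR N.
Proof.
  rewrite N_as_4q, mult_INR; replace (INR 4) with 4 by (simpl; lra).
  assert (1 <= INR (N / 4)) by (apply (le_INR 1); pose proof N_as_4q; lia); lra.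
Qed.

Lemma ln_N_ge1 : 1 <= ln (INR N).
Proof.
  rewrite <- ln_exp at 1; apply ln_le; [apply exp_pos|].
  pose proof exp_le_3; pose proof N_ge4; lra.
Qed.

Lemma lam_pos : 0 < l.
Proof.
  pose proof ln_N_ge1; pose proof (sqrt_lt_R0 m m_pos); unfold l, lam; apply Rdiv_lt_0_compat; nra.
Qed.

Lemma transition_steps :
  0 < hf <= / INR N /\ hf <= l /\ 0 <= hc <= 2 / INR N /\ hc <= 1 - 2 * l.
Proof.
  pose proof N_ge4; pose proof lam_pos; pose proof lam_le as Hl4; fold l in Hl4.
  assert (Hinv : 0 < / INR N <= / 4)
    by (split; [apply Rinv_0_lt_compat | apply Rinv_le_contravar]; lra).
  unfold hf, hc, Rdiv; repeat split; nra.
Qed.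

Lemma R'_nonneg : 0 <= R'.
Proof.
  pose proof P_nonneg; pose proof K_nonneg; pose proof (exp_pos 8).
  unfold R'; apply Rplus_le_le_0_compat; [apply Rdiv_le_0_compat|]; nra.
Qed.

Lemma solution_close_near_transition X : l - hf <= X <= 1 - l ->
  0 <= X <= 1 /\ Rabs (y X - u0 X) <= R.
Proof.
  intros HX; pose proof lam_pos; pose proof N_ge4; pose proof P_nonneg.
  destruct transition_steps as [_ [Hhf _]].
  split; [lra|].
  eapply Rle_trans; [apply solution_barrier_estimate; lra|].
  eapply Rle_trans.
  - apply (layer_barrier_near_transition _ K s (INR N) l X);
      [exact K_nonneg | lra | | | exact (proj1 HX) | lra].
    + pose proof (sqrt_lt_R0 m m_pos); unfold s, l, lam; field; lra.
    + apply Rdiv_lt_0_compat; [apply sqrt_lt_R0|]; lra.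
  - unfold R, R', A.
    replace ((C0 ^ 2 * P / m + K * (exp 8 + 1)) / (INR N * INR N))
      with (C0 ^ 2 / (INR N * INR N) * P / m + K * (exp 8 + 1) / (INR N * INR N))
      by (field; lra).
    apply Rplus_le_compat_r.
    assert (eps ^ 2 <= C0 ^ 2 / (INR N * INR N)).
    { replace (C0 ^ 2 / (INR N * INR N)) with ((C0 / INR N) ^ 2) by (field; lra).
      apply pow_incr; lra. }
    unfold Rdiv; apply Rmult_le_compat_r; [left; apply Rinv_0_lt_compat; lra|].
    apply Rmult_le_compat_r; lra.
Qed.

Lemma solution_increment_near_transition X X' :
  l - hf <= X <= 1 - l -> l - hf <= X' <= 1 - l ->
  Rabs (y X - y X') <= L * Rabs (X - X') + 2 * R.
Proof.
  intros HX HX'.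
  destruct (solution_close_near_transition X HX) as [HXi HR].
  destruct (solution_close_near_transition X' HX') as [HXi' HR'].
  pose proof (reduced_lipschitz X X' HXi HXi').
  replace (y X - y X') with ((y X - u0 X) + (u0 X - u0 X') - (y X' - u0 X')) by ring.
  unfold Rminus at 1; eapply Rle_trans; [apply Rabs_triang|]; rewrite Rabs_Ropp.
  pose proof (Rabs_triang (y X - u0 X) (u0 X - u0 X')); lra.
Qed.

Lemma gamma_pos : 0 < gamma.
Proof. destruct (f_slope 0 0 1); lra. Qed.

Lemma reaction_sum_near_transition X0 X1 X2 :
  l - hf <= X0 <= 1 - l -> l - hf <= X1 <= 1 - l -> l - hf <= X2 <= 1 - l ->
  Rabs (f X0 (y X0) + 2 * f X1 (y X1) + f X2 (y X2)) <= 4 * gamma * R.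
Proof.
  intros W0 W1 W2; pose proof gamma_pos.
  destruct (solution_close_near_transition _ W0) as [Hi0 HR0].
  destruct (solution_close_near_transition _ W1) as [Hi1 HR1].
  destruct (solution_close_near_transition _ W2) as [Hi2 HR2].
  pose proof (reaction_le _ Hi0); pose proof (reaction_le _ Hi1); pose proof (reaction_le _ Hi2).
  eapply Rle_trans; [apply Rabs_triang|].
  eapply Rle_trans; [apply Rplus_le_compat_r, Rabs_triang|].
  rewrite Rabs_mult, (Rabs_right 2) by lra; nra.
Qed.

Lemma coarse_step_ge : T <= sqrt gamma / eps * hc.
Proof.
  pose proof N_ge4; pose proof lam_le as Hl4; fold l in Hl4; pose proof gamma_pos.
  assert (eps * INR N <= C0)
    by (apply Rmult_le_reg_r with (/ INR N); [apply Rinv_0_lt_compat; lra|];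
        rewrite Rmult_assoc, Rinv_r, Rmult_1_r by lra; exact eps_le).
  pose proof (sqrt_lt_R0 gamma gamma_pos).
  unfold T, hc; replace (sqrt gamma / eps * (2 * (1 - 2 * l) / INR N))
    with (sqrt gamma * (2 * (1 - 2 * l)) / (eps * INR N)) by (field; lra).
  apply Rdiv_le_compat; [split|split]; nra.
Qed.

Lemma Gop_transition_three_terms :
  Rabs (Gop f gamma eps (mesh eps m N) N (fun j => y (mesh eps m N j)) (N / 4))
  <= (4 * sqrt gamma * (eps / hf) + 2 * gamma) / c * (L * hf + 2 * R)
     + gamma * (4 / sinh T + 2) / c * (L * hc + 2 * R) + 4 * gamma * R.
Proof.
  pose proof N_ge4; pose proof lam_pos; pose proof gamma_pos.
  destruct transition_steps as [Hhf [Hhfl [Hhc Hhc1]]].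
  pose proof N_as_4q as EN.
  destruct (mesh_transition eps m N (N / 4) EN ltac:(lia)) as [E0 [E1 E2]].
  fold l hf hc in E0, E1, E2.
  rewrite Gop_at_interior, E0, E1, E2 by lia.
  replace (l - (l - hf)) with hf by ring; replace (l + hc - l) with hc by ring.
  assert (HT : 0 < T) by (apply Rdiv_lt_0_compat; [apply sqrt_lt_R0|]; lra).
  eapply Rle_trans; [apply (Gop_interior_bound _ _ _ _ T); try apply coarse_step_ge; try lra;
                     apply Rdiv_lt_0_compat; [apply sqrt_lt_R0|]; lra|].
  fold c; assert (Hc : 0 < c < 1) by apply tanh_half_bounds, HT.
  assert (W0 : l - hf <= l - hf <= 1 - l) by lra.
  assert (W1 : l - hf <= l <= 1 - l) by lra.
  assert (W2 : l - hf <= l + hc <= 1 - l) by lra.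
  assert (Hd01 := solution_increment_near_transition _ _ W0 W1).
  assert (Hd12 := solution_increment_near_transition _ _ W1 W2).
  replace (Rabs (l - hf - l)) with hf in Hd01
    by (rewrite Rabs_minus_sym, Rabs_right; [ring | lra]).
  replace (Rabs (l - (l + hc))) with hc in Hd12
    by (rewrite Rabs_minus_sym, Rabs_right; [ring | lra]).
  apply Rplus_le_compat; [apply Rplus_le_compat|].
  - set (sg := sqrt gamma); assert (Hsg : 0 < sg) by apply sqrt_lt_R0, gamma_pos.
    assert (Egs : gamma = sg * sg) by (symmetry; apply sqrt_sqrt; lra).
    replace (gamma * (4 / hf + 2 * (sg / eps)) / (sg / eps * c))
      with ((4 * sg * (eps / hf) + 2 * gamma) / c) by (rewrite Egs; field; lra).
    apply Rmult_le_compat_l; [|exact Hd01].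
    assert (0 <= eps / hf) by (apply Rdiv_le_0_compat; lra).
    apply Rdiv_le_0_compat; nra.
  - apply Rmult_le_compat_l; [|exact Hd12].
    assert (0 < sinh T) by (pose proof (id_le_sinh T ltac:(lra)); lra).
    assert (0 <= 4 / sinh T) by (apply Rdiv_le_0_compat; lra).
    apply Rdiv_le_0_compat; nra.
  - apply reaction_sum_near_transition; assumption.
Qed.

Lemma Gop_transition_le :
  Rabs (Gop f gamma eps (mesh eps m N) N (fun j => y (mesh eps m N j)) (N / 4))
  <= transition_const gamma m C0 L P K / INR N.
Proof.
  eapply Rle_trans; [apply Gop_transition_three_terms|].
  pose proof N_ge4; pose proof gamma_pos; pose proof L_nonneg; pose proof R'_nonneg.
  destruct transition_steps as [Hhf [_ [Hhc _]]]; unfold Rdiv in Hhc.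
  set (sg := sqrt gamma); set (sm := sqrt m); set (r := / INR N) in *.
  assert (Hsg : 0 < sg) by apply sqrt_lt_R0, gamma_pos.
  assert (Hr : 0 < r <= 1)
    by (split; [apply Rinv_0_lt_compat | rewrite <- Rinv_1; apply Rinv_le_contravar]; lra).
  assert (ER : R = R' * (r * r)) by (unfold R, r; field; lra).
  assert (HRr : R <= R' * r) by (rewrite ER; apply Rmult_le_compat_l; nra).
  assert (HT : 0 < T) by (unfold T; apply Rdiv_lt_0_compat; [apply sqrt_lt_R0|]; lra).
  assert (Hc : 0 < c < 1) by apply tanh_half_bounds, HT.
  assert (Hsinh : 0 < sinh T) by (pose proof (id_le_sinh T ltac:(lra)); lra).
  assert (Hsmh : 8 * eps * r <= sm * hf).
  { replace (sm * hf) with (8 * eps * r * ln (INR N))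
      by (unfold hf, l, lam, r, sm; pose proof (sqrt_lt_R0 m m_pos); field; lra).
    pose proof ln_N_ge1; assert (0 <= 8 * eps * r) by nra; nra. }
  assert (T1 : (4 * sg * (eps / hf) + 2 * gamma) / c * (L * hf + 2 * R)
               <= (4 * sg * L * C0 + sg * sm * R' + 2 * gamma * L + 4 * gamma * R') * r / c).
  { rewrite ER; apply Rle_trans
      with ((4 * sg * (eps / hf) + 2 * gamma) * (L * hf + 2 * (R' * (r * r))) / c);
      [right; field; lra|].
    apply Rmult_le_compat_r; [left; apply Rinv_0_lt_compat; lra|].
    apply fine_side_term_le; try lra; exact eps_le. }
  assert (T2 : gamma * (4 / sinh T + 2) / c * (L * hc + 2 * R)
               <= gamma * (4 / sinh T + 2) / c * ((2 * L + 2 * R') * r)).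
  { assert (0 <= 4 / sinh T) by (apply Rdiv_le_0_compat; lra).
    apply Rmult_le_compat_l; [apply Rdiv_le_0_compat; nra|].
    assert (L * hc <= L * (2 * r)) by (apply Rmult_le_compat_l; lra).
    lra. }
  change (transition_const gamma m C0 L P K / INR N) with
    (((4 * sg * L * C0 + sg * sm * R' + 2 * gamma * L + 4 * gamma * R'
       + gamma * (4 / sinh T + 2) * (2 * L + 2 * R')) / c + 4 * gamma * R') * r).
  replace (((4 * sg * L * C0 + sg * sm * R' + 2 * gamma * L + 4 * gamma * R'
             + gamma * (4 / sinh T + 2) * (2 * L + 2 * R')) / c + 4 * gamma * R') * r)
    with ((4 * sg * L * C0 + sg * sm * R' + 2 * gamma * L + 4 * gamma * R') * r / c
          + gamma * (4 / sinh T + 2) / c * ((2 * L + 2 * R') * r) + 4 * gamma * (R' * r))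
    by (field; lra).
  assert (4 * gamma * R <= 4 * gamma * (R' * r)) by (apply Rmult_le_compat_l; lra).
  lra.
Qed.

End Transition.

Theorem lemma4 :
  forall (k : nat) (f : R -> R -> R) (m gamma C0 : R),
    (2 <= k)%nat ->
    Ck k f ->
    0 < m ->
    (forall x v, 0 <= x <= 1 -> m <= f_y f x v) ->
    (forall x v, 0 <= x <= 1 -> f_y f x v <= gamma) ->
    0 < C0 ->
    exists C : R, 0 < C /\
      forall (eps : R) (N : nat) (y : R -> R),
        0 < eps ->
        (0 < N)%nat -> (N mod 4 = 0)%nat ->
        lam eps m N <= 1 / 4 ->
        eps <= C0 / INR N ->
        (* y is a (classical) solution of the boundary value problem *)
        (forall x, 0 <= x <= 1 ->
           filterlim y (within (fun t => 0 <= t <= 1) (locally x)) (locally (y x))) ->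
        (exists y1 y2 : R -> R, forall x, 0 < x < 1 ->
            is_derive y x (y1 x) /\ is_derive y1 x (y2 x) /\
            eps ^ 2 * y2 x = f x (y x)) ->
        y 0 = 0 -> y 1 = 0 ->
        Rabs (Gop f gamma eps (mesh eps m N) N (fun j => y (mesh eps m N j)) (N / 4)%nat)
          <= C / INR N.
Proof.
  intros k f m gamma C0 Hk HCk Hm Hfy_ge Hfy_le HC0.
  destruct (Ck2_partials f (Ck_2_of_ge k f Hk HCk)) as
    (fx & fy & fxx & fxy & fyx & fyy & Cf & Cfx & Cfy & Cfxx & Cfxy & Cfyx & Cfyy & Pf & Pfx & Pfy).
  assert (Hfy : forall x v, 0 <= x <= 1 -> m <= fy x v <= gamma).
  { intros x v Hx; rewrite <- (is_derive_unique _ _ _ (proj2 (Pf x v Hx))).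
    split; [apply Hfy_ge | apply Hfy_le]; exact Hx. }
  destruct (reduced_solution_C2_bounded f fx fy fxx fxy fyx fyy m gamma)
    as (u1 & u2 & L & P & Hroot & Hcont & Hderiv & HL & HP); auto.
  set (u0 := reduced_solution f) in *.
  set (C := transition_const gamma m C0 L P (Rabs (u0 0) + Rabs (u0 1))).
  exists (Rmax 1 C); split; [pose proof (Rmax_l 1 C); lra|].
  intros eps N y Heps HN HN4 Hlam Heps_le Hyc [y1 [y2 Hy]] Hy0 Hy1.
  apply Rle_trans with (C / INR N).
  - apply (Gop_transition_le f m gamma u0 u1 u2 L P) with (y1 := y1) (y2 := y2); auto.
    apply (slope_bounded_of_partials f fx fy m gamma Pf Hfy).
  - unfold Rdiv; apply Rmult_le_compat_r; [left; apply Rinv_0_lt_compat, lt_0_INR, HN|].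
    apply Rmax_r.
Qed.
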